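(* Let $G$ be a finitely generated group which is not nilpotent. Then there exists $a\in G$ such that the normal subgroup of $G$ generated by $a$ is not nilpotent. *)

From Stdlib Require Import List.

Record Group := {
  carrier :> Type;
  gmul : carrier -> carrier -> carrier;
  gone : carrier;
  ginv : carrier -> carrier;
  gmulA : forall x y z, gmul x (gmul y z) = gmul (gmul x y) z;
  gmul1g : forall x, gmul gone x = x;
  gmulVg : forall x, gmul (ginv x) x = gone
}.

Arguments gmul {g}.
Arguments gone {g}.
Arguments ginv {g}.

Definition is_subgroup {G : Group} (H : G -> Prop) : Prop :=
  H gone /\ (forall x y, H x -> H y -> H (gmul x y)) /\ (forall x, H x -> H (ginv x)).

Definition generated {G : Group} (S : G -> Prop) : G -> Prop :=
  fun x => forall H, is_subgroup H -> (forall y, S y -> H y) -> H x.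

Definition finitely_generated (G : Group) : Prop :=
  exists l : list G, forall x : G, generated (fun y => In y l) x.

Definition is_normal {G : Group} (N : G -> Prop) : Prop :=
  is_subgroup N /\ forall g x, N x -> N (gmul (gmul g x) (ginv g)).

Definition normal_closure {G : Group} (a : G) : G -> Prop :=
  fun x => forall N, is_normal N -> N a -> N x.

Definition comm {G : Group} (x y : G) : G :=
  gmul (gmul (gmul (ginv x) (ginv y)) x) y.

Fixpoint lower_central {G : Group} (H : G -> Prop) (n : nat) : G -> Prop :=
  match n with
  | O => H
  | S n => generated (fun z => exists x y, lower_central H n x /\ H y /\ z = comm x y)
  end.

Definition nilpotent_subgroup {G : Group} (H : G -> Prop) : Prop :=
  exists n, forall x, lower_central H n x -> x = gone.

Definition nilpotent_group (G : Group) : Prop :=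
  nilpotent_subgroup (fun _ : G => True).

(* Fitting's theorem: if M and N are normal nilpotent subgroups, of classes c
   and d, then MN is nilpotent of class at most c + d + 1.  Indeed, every term
   of the lower central series of MN is generated by elements lying in some
   gamma_a(M) and some gamma_b(N) with a + b large, and for a + b > c + d + 1
   one of the two factors is trivial.  A group generated by g_1, ..., g_k is the
   product of the normal closures of the g_i, so if each of these closures were
   nilpotent, so would be the group. *)

From Stdlib Require Import List Classical Lia.

Arguments gmulA {g}.
Arguments gmul1g {g}.
Arguments gmulVg {g}.

Section GroupLaws.
Context {G : Group}.
Implicit Types x y : G.

Lemma gmulKg x y : gmul (ginv x) (gmul x y) = y.
Proof. rewrite gmulA, gmulVg; apply gmul1g. Qed.

Lemma gmulgV x : gmul x (ginv x) = gone.
Proof.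
  rewrite <- (gmul1g (gmul x (ginv x))), <- (gmulVg (ginv x)) at 1.
  rewrite <- gmulA, (gmulKg x); apply gmulVg.
Qed.

Lemma gmulKVg x y : gmul x (gmul (ginv x) y) = y.
Proof. rewrite gmulA, gmulgV; apply gmul1g. Qed.

Lemma gmulg1 x : gmul x gone = x.
Proof. rewrite <- (gmulVg x); apply gmulKVg. Qed.

Lemma ginv_unique x y : gmul x y = gone -> ginv x = y.
Proof. intros Hxy. rewrite <- (gmulg1 (ginv x)), <- Hxy; apply gmulKg. Qed.

Lemma ginvK x : ginv (ginv x) = x.
Proof. apply ginv_unique, gmulVg. Qed.

Lemma ginvM x y : ginv (gmul x y) = gmul (ginv y) (ginv x).
Proof. apply ginv_unique. rewrite <- !gmulA, gmulKVg; apply gmulgV. Qed.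

Lemma ginv1 : ginv (@gone G) = gone.
Proof. apply ginv_unique, gmul1g. Qed.

End GroupLaws.

Hint Rewrite <- @gmulA : grp.
Hint Rewrite @gmul1g @gmulg1 @gmulVg @gmulgV @gmulKg @gmulKVg @ginvK @ginvM @ginv1 : grp.

Ltac gsimpl := unfold comm; autorewrite with grp; reflexivity.

Section Subgroups.
Context {G : Group}.
Implicit Types (x y z g m : G) (S H K N : G -> Prop).

Lemma subgroup1 H : is_subgroup H -> H gone.
Proof. intros [H1 _]. exact H1. Qed.

Lemma subgroupM H x y : is_subgroup H -> H x -> H y -> H (gmul x y).
Proof. intros (_ & HM & _). auto. Qed.

Lemma subgroupV H x : is_subgroup H -> H x -> H (ginv x).
Proof. intros (_ & _ & HV). auto. Qed.

Lemma normal_subgroup N : is_normal N -> is_subgroup N.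
Proof. intros [HN _]. exact HN. Qed.

Lemma normal_conj N g x : is_normal N -> N x -> N (gmul (gmul g x) (ginv g)).
Proof. intros [_ HN] Hx. auto. Qed.

Lemma subgroup_meet (P : (G -> Prop) -> Prop) :
  is_subgroup (fun x => forall H, is_subgroup H -> P H -> H x).
Proof.
  repeat split.
  - intros H HH _. apply subgroup1, HH.
  - intros x y Hx Hy H HH HP. exact (subgroupM H _ _ HH (Hx H HH HP) (Hy H HH HP)).
  - intros x Hx H HH HP. exact (subgroupV H _ HH (Hx H HH HP)).
Qed.

Lemma normal_meet (P : (G -> Prop) -> Prop) :
  is_normal (fun x => forall N, is_normal N -> P N -> N x).
Proof.
  repeat split.
  - intros N HN _. apply subgroup1, normal_subgroup, HN.
  - intros x y Hx Hy N HN HP.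
    exact (subgroupM N _ _ (normal_subgroup N HN) (Hx N HN HP) (Hy N HN HP)).
  - intros x Hx N HN HP. exact (subgroupV N _ (normal_subgroup N HN) (Hx N HN HP)).
  - intros g x Hx N HN HP. exact (normal_conj N g x HN (Hx N HN HP)).
Qed.

Lemma generated_subgroup S : is_subgroup (generated S).
Proof. apply subgroup_meet. Qed.

Lemma generated_min S H :
  is_subgroup H -> (forall y, S y -> H y) -> forall x, generated S x -> H x.
Proof. intros HH HS x Hx. apply Hx; auto. Qed.

Lemma sub_generated S y : S y -> generated S y.
Proof. intros Hy H _ HS. auto. Qed.

Lemma generated_mono S S' :
  (forall z, S z -> S' z) -> forall x, generated S x -> generated S' x.
Proof. intros HS x Hx H HH HS'. apply Hx; auto. Qed.

Lemma normal_trivial : is_normal (fun x : G => x = gone).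
Proof.
  repeat split.
  - intros x y -> ->. apply gmul1g.
  - intros x ->. apply ginv1.
  - intros g x ->. gsimpl.
Qed.

Lemma normal_full : is_normal (fun _ : G => True).
Proof. repeat split. Qed.

Lemma generated_normal S :
  (forall g y, S y -> S (gmul (gmul g y) (ginv g))) -> is_normal (generated S).
Proof.
  intros HS. split; [apply generated_subgroup|]. intros g x.
  pose proof (generated_subgroup S) as (G1 & G2 & G3).
  apply (generated_min S (fun z => generated S (gmul (gmul g z) (ginv g)))).
  - repeat split.
    + rewrite gmulg1, gmulgV. exact G1.
    + intros a b Ha Hb.
      replace (gmul (gmul g (gmul a b)) (ginv g))
        with (gmul (gmul (gmul g a) (ginv g)) (gmul (gmul g b) (ginv g))) by gsimpl.
      auto.
    + intros a Ha.
      replace (gmul (gmul g (ginv a)) (ginv g))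
        with (ginv (gmul (gmul g a) (ginv g))) by gsimpl.
      auto.
  - intros y Hy. apply sub_generated. auto.
Qed.

Lemma normal_closure_normal (a : G) : is_normal (normal_closure a).
Proof. apply normal_meet. Qed.

Lemma comm_conj g x y :
  gmul (gmul g (comm x y)) (ginv g)
  = comm (gmul (gmul g x) (ginv g)) (gmul (gmul g y) (ginv g)).
Proof. gsimpl. Qed.

Lemma normal_comml K x y : is_normal K -> K x -> K (comm x y).
Proof.
  intros HK Hx.
  pose proof (normal_subgroup K HK) as HKs.
  replace (comm x y) with (gmul (ginv x) (gmul (gmul (ginv y) x) (ginv (ginv y)))) by gsimpl.
  exact (subgroupM K _ _ HKs (subgroupV K _ HKs Hx) (normal_conj K _ _ HK Hx)).
Qed.

Lemma normal_commr K x y : is_normal K -> K y -> K (comm x y).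
Proof.
  intros HK Hy.
  pose proof (normal_subgroup K HK) as HKs.
  replace (comm x y) with (gmul (gmul (gmul (ginv x) (ginv y)) (ginv (ginv x))) y) by gsimpl.
  exact (subgroupM K _ _ HKs (normal_conj K _ _ HK (subgroupV K _ HKs Hy)) Hy).
Qed.

Definition prodset (M N : G -> Prop) : G -> Prop :=
  fun x => exists m n, M m /\ N n /\ x = gmul m n.

Lemma prodset_normal M N : is_normal M -> is_normal N -> is_normal (prodset M N).
Proof.
  intros HM HN. pose proof HM as [(M1 & M2 & M3) _]. pose proof HN as [(N1 & N2 & N3) _].
  repeat split.
  - exists gone, gone. rewrite gmul1g. auto.
  - intros x y (m & n & Hm & Hn & ->) (m' & n' & Hm' & Hn' & ->).
    exists (gmul m (gmul (gmul n m') (ginv n))), (gmul n n').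
    split; [apply M2, normal_conj|split; [|gsimpl]]; auto.
  - intros x (m & n & Hm & Hn & ->).
    exists (gmul (gmul (ginv n) (ginv m)) (ginv (ginv n))), (ginv n).
    split; [apply normal_conj|split; [|gsimpl]]; auto.
  - intros g x (m & n & Hm & Hn & ->).
    exists (gmul (gmul g m) (ginv g)), (gmul (gmul g n) (ginv g)).
    split; [apply normal_conj|split; [apply normal_conj|gsimpl]]; auto.
Qed.

End Subgroups.

Section LowerCentralSeries.
Context {G : Group}.
Implicit Types (x y m : G) (H M : G -> Prop).

Lemma lower_central_normal M i : is_normal M -> is_normal (lower_central M i).
Proof.
  intros HM. induction i as [|i IH]; [exact HM|].
  apply generated_normal. intros g z (x & y & Hx & Hy & ->).
  exists (gmul (gmul g x) (ginv g)), (gmul (gmul g y) (ginv g)).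
  split; [|split]; [apply normal_conj..|apply comm_conj]; auto.
Qed.

Lemma lower_central_mono H (H' : G -> Prop) :
  (forall x, H x -> H' x) -> forall i x, lower_central H i x -> lower_central H' i x.
Proof.
  intros HH' i. induction i as [|i IH]; [exact HH'|].
  apply generated_mono. intros z (x & y & Hx & Hy & ->).
  exists x, y. repeat split; [apply IH | apply HH']; auto.
Qed.

Lemma nilpotent_subgroup_sub H (H' : G -> Prop) :
  (forall x, H x -> H' x) -> nilpotent_subgroup H' -> nilpotent_subgroup H.
Proof.
  intros HH' [n Hn]. exists n. intros x Hx. apply Hn.
  apply (lower_central_mono H); auto.
Qed.

(* [gamma M 0] is the whole group and [gamma M (S i)] is the [i]-th term of the
   lower central series of [M]; with this shift [comm (gamma M i) M] lies in
   [gamma M (S i)] for every [i], including [i = 0], and weights add up. *)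
Definition gamma M (i : nat) : G -> Prop :=
  match i with O => fun _ => True | S j => lower_central M j end.

Lemma gamma_normal M i : is_normal M -> is_normal (gamma M i).
Proof. intros HM. destruct i; [apply normal_full|apply lower_central_normal; auto]. Qed.

Lemma gamma_comm M i x m : is_normal M -> gamma M i x -> M m -> gamma M (S i) (comm x m).
Proof.
  intros HM Hx Hm. destruct i as [|j].
  - apply normal_commr; auto.
  - apply sub_generated. exists x, m. auto.
Qed.

Lemma gamma_decr M i x : is_normal M -> gamma M (S i) x -> gamma M i x.
Proof.
  intros HM. destruct i as [|j]; [constructor|].
  apply generated_min; [apply lower_central_normal; auto|].
  intros z (a & b & Ha & Hb & ->). apply normal_comml; [apply lower_central_normal|]; auto.
Qed.

Lemma gamma_antitone M i j x : is_normal M -> i <= j -> gamma M j x -> gamma M i x.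
Proof. intros HM Hij. induction Hij; auto using gamma_decr. Qed.

End LowerCentralSeries.

Section WeightFiltration.
Context {G : Group}.
Variables M N : G -> Prop.
Hypotheses (HM : is_normal M) (HN : is_normal N).

Definition weight_subgroup (w : nat) : G -> Prop :=
  generated (fun z => exists a b, w <= a + b /\ gamma M a z /\ gamma N b z).

Lemma weight_subgroup_normal w : is_normal (weight_subgroup w).
Proof.
  apply generated_normal. intros g y (a & b & Hab & Ha & Hb).
  exists a, b. split; [|split]; auto; apply normal_conj; auto; apply gamma_normal; auto.
Qed.

Lemma comm_weight_subgroup w x m :
  weight_subgroup w x -> M m -> weight_subgroup (S w) (comm x m).
Proof.
  intros Hx Hm. revert x Hx.
  pose proof (weight_subgroup_normal (S w)) as HW.
  pose proof (normal_subgroup _ HW) as HWs.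
  apply (generated_min _ (fun x => weight_subgroup (S w) (comm x m))).
  - repeat split.
    + replace (comm gone m) with (@gone G) by gsimpl.
      apply subgroup1, HWs.
    + intros x y Hx Hy.
      replace (comm (gmul x y) m)
        with (gmul (gmul (gmul (ginv y) (comm x m)) (ginv (ginv y))) (comm y m)) by gsimpl.
      exact (subgroupM _ _ _ HWs (normal_conj _ _ _ HW Hx) Hy).
    + intros x Hx.
      replace (comm (ginv x) m) with (gmul (gmul x (ginv (comm x m))) (ginv x)) by gsimpl.
      exact (normal_conj _ _ _ HW (subgroupV _ _ HWs Hx)).
  - intros z (a & b & Hab & Ha & Hb). apply sub_generated.
    exists (S a), b. split; [lia|split].
    + apply gamma_comm; auto.
    + apply normal_comml; [apply gamma_normal|]; auto.
Qed.

End WeightFiltration.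

Lemma weight_subgroup_sym {G : Group} (M N : G -> Prop) w x :
  weight_subgroup M N w x -> weight_subgroup N M w x.
Proof.
  apply generated_mono. intros z (a & b & Hab & Ha & Hb). exists b, a. repeat split; auto; lia.
Qed.


Section Fitting.
Context {G : Group}.
Variables M N : G -> Prop.
Hypotheses (HM : is_normal M) (HN : is_normal N).

Lemma comm_weight_subgroup_prodset w x y :
  weight_subgroup M N w x -> prodset M N y -> weight_subgroup M N (S w) (comm x y).
Proof.
  intros Hx (m & n & Hm & Hn & ->).
  replace (comm x (gmul m n))
    with (gmul (comm x n) (gmul (gmul (ginv n) (comm x m)) (ginv (ginv n)))) by gsimpl.
  pose proof (weight_subgroup_normal M N HM HN (S w)) as HW.
  apply (subgroupM _ _ _ (normal_subgroup _ HW)).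
  - apply (weight_subgroup_sym N M), comm_weight_subgroup; auto using weight_subgroup_sym.
  - apply (normal_conj _ _ _ HW), comm_weight_subgroup; auto.
Qed.

Lemma lower_central_prodset_weight i x :
  lower_central (prodset M N) i x -> weight_subgroup M N (S i) x.
Proof.
  revert x. induction i as [|i IH].
  - intros x (m & n & Hm & Hn & ->). apply generated_subgroup.
    + apply sub_generated. exists 1, 0. simpl. auto.
    + apply sub_generated. exists 0, 1. simpl. auto.
  - apply generated_min; [apply generated_subgroup|].
    intros z (x & y & Hx & Hy & ->). apply comm_weight_subgroup_prodset; auto.
Qed.

Theorem fitting_nilpotent :
  nilpotent_subgroup M -> nilpotent_subgroup N -> nilpotent_subgroup (prodset M N).
Proof.
  intros [c Hc] [d Hd]. exists (c + d + 1). intros x Hx.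
  apply lower_central_prodset_weight in Hx. revert x Hx.
  apply generated_min; [apply normal_trivial|].
  intros z (a & b & Hab & Ha & Hb).
  destruct (Compare_dec.le_lt_dec (S c) a) as [Hca|Hac].
  - apply Hc, (gamma_antitone M (S c) a); auto.
  - apply Hd, (gamma_antitone N (S d) b); auto; lia.
Qed.

End Fitting.

Definition normal_closure_list {G : Group} (l : list G) : G -> Prop :=
  fun x => forall N, is_normal N -> (forall y, In y l -> N y) -> N x.

Lemma normal_closure_list_normal {G : Group} (l : list G) : is_normal (normal_closure_list l).
Proof. apply normal_meet. Qed.

Lemma normal_closure_list_nilpotent {G : Group} (l : list G) :
  (forall a : G, nilpotent_subgroup (normal_closure a)) ->
  nilpotent_subgroup (normal_closure_list l).
Proof.
  intros Hall. induction l as [|a l IH].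
  - exists 0. intros x Hx. apply Hx; [apply normal_trivial|intros y []].
  - pose proof (normal_closure_normal a) as Ha.
    pose proof (normal_closure_list_normal l) as Hl.
    apply (nilpotent_subgroup_sub _ (prodset (normal_closure a) (normal_closure_list l))).
    + intros x Hx. apply Hx; [apply prodset_normal; auto|].
      intros z [<- | Hz].
      * exists a, gone. split; [|split].
        -- intros N _ HNa. exact HNa.
        -- apply subgroup1, normal_subgroup, Hl.
        -- symmetry; apply gmulg1.
      * exists gone, z. split; [|split].
        -- apply subgroup1, normal_subgroup, Ha.
        -- intros N _ HNl. apply HNl, Hz.
        -- symmetry; apply gmul1g.
    + apply fitting_nilpotent; auto.
Qed.

Theorem mainTheorem10 (G : Group) :
  finitely_generated G -> ~ nilpotent_group G ->
  exists a : G, ~ nilpotent_subgroup (normal_closure a).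
Proof.
  intros [l Hl] Hnot. apply not_all_ex_not. intros Hall. apply Hnot.
  apply (nilpotent_subgroup_sub _ (normal_closure_list l)).
  - intros x _. apply (generated_min (fun y => In y l)); [| |apply Hl].
    + apply normal_subgroup, normal_closure_list_normal.
    + intros y Hy N _ HNl. apply HNl, Hy.
  - apply normal_closure_list_nilpotent; auto.
Qed.
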